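(* The axioms (S1)–(S5) are independent: for each $i\in\{1,2,3,4,5\}$ there is a structure $\langle M,\mathsf{S}\rangle$, with $M$ a non-empty set and $\mathsf{S}\subseteq M\times\mathcal{P}(M)$, that satisfies every axiom (S$j$) with $j\neq i$ but does not satisfy (S$i$).
   Context: For a set $M$ and a relation $\mathsf{S}\subseteq M\times\mathcal{P}(M)$ define: $x\sqsubseteq_{\mathsf{S}} y$ iff there is $X\subseteq M$ with $y\,\mathsf{S}\,X$ and $x\in X$; $\mathrm{I}(x)=\{y\in M\mid y\sqsubseteq_{\mathsf{S}} x\}$ and for $A\subseteq M$, $\mathrm{I}(A)=\bigcup_{a\in A}\mathrm{I}(a)$; $x$ s-overlaps $y$ iff there are $X,Y\subseteq M$ with $x\,\mathsf{S}\,X$, $y\,\mathsf{S}\,Y$, $X\cap Y\neq\emptyset$; a set $A\subseteq M$ is pre-dense in $B\subseteq M$ iff for every $b\in B$ there is $a\in A$ such that $a$ s-overlaps $b$. Axioms (all variables range over $M$, capital letters over subsets of $M$): (S1) for every non-empty $X\subseteq M$ there is $x\in M$ with $x\,\mathsf{S}\,X$; (S2) $x\,\mathsf{S}\,X\wedge y\,\mathsf{S}\,X\to x=y$; (S3) $x\,\mathsf{S}\,X\wedge y\,\mathsf{S}\,Y\wedge x\in Y\to y\,\mathsf{S}\,(X\cup Y)$; (S4) if $x\,\mathsf{S}\,X$, $x\,\mathsf{S}\,Y$ and $y\in Y$, then there are $z\in X$ and $Z,U\subseteq M$ with $z\,\mathsf{S}\,Z$, $y\,\mathsf{S}\,U$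 and $Z\cap U\neq\emptyset$; (S5) for all $x\in M$ and $X\subseteq M$: if $X$ is pre-dense in $\mathrm{I}(x)$ then $x\,\mathsf{S}\,(\mathrm{I}(x)\cap\mathrm{I}(X))$. *)

(* Subsets of M are predicates M -> Prop (P(M)); a structure
   <M, S> is a type M with a relation S : M -> (M -> Prop) -> Prop. *)

Section StructAx.
Variable M : Type.
Variable S : M -> (M -> Prop) -> Prop.

Definition setU (X Y : M -> Prop) : M -> Prop := fun z => X z \/ Y z.

Definition sle (x y : M) : Prop := exists X, S y X /\ X x.

Definition Iof (x : M) : M -> Prop := fun y => sle y x.

Definition IofSet (A : M -> Prop) : M -> Prop :=
  fun y => exists a, A a /\ Iof a y.

Definition soverlaps (x y : M) : Prop :=
  exists X Y, S x X /\ S y Y /\ exists z, X z /\ Y z.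

Definition predense (A B : M -> Prop) : Prop :=
  forall b, B b -> exists a, A a /\ soverlaps a b.

Definition axS1 : Prop :=
  forall X : M -> Prop, (exists x, X x) -> exists x, S x X.

Definition axS2 : Prop :=
  forall (x y : M) (X : M -> Prop), S x X -> S y X -> x = y.

Definition axS3 : Prop :=
  forall (x y : M) (X Y : M -> Prop), S x X -> S y Y -> Y x -> S y (setU X Y).

Definition axS4 : Prop :=
  forall (x y : M) (X Y : M -> Prop), S x X -> S x Y -> Y y ->
    exists z (Z U : M -> Prop), X z /\ S z Z /\ S y U /\ exists w, Z w /\ U w.

Definition axS5 : Prop :=
  forall (x : M) (X : M -> Prop), predense X (Iof x) ->
    S x (fun y => Iof x y /\ IofSet X y).

Definition ax_nr (i : nat) : Prop :=
  match i with
  | 1 => axS1 | 2 => axS2 | 3 => axS3 | 4 => axS4 | 5 => axS5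
  | _ => True
  end.

End StructAx.

(* For each i we exhibit a small structure <M, S> satisfying every axiom
   except (Si):
   - (S1) fails on a one-point M where S relates the point only to the
     empty set, so no non-empty set has a sum;
   - (S2) fails on a two-point M where every point is a sum of every
     non-empty set;
   - (S3) fails on M = {A, B, C} where A sums the non-empty sets avoiding C,
     B the sets containing C and one of A, B, and C only the set {C};
   - (S4) fails on a two-point M where true sums every non-empty set and
     false sums only the empty set;
   - (S5) fails on a two-point M where true sums the sets containing true
     and false the sets containing false but not true. *)

From Stdlib Require Import Classical Lia.

Definition independence_model (i : nat) (M : Type)
    (S : M -> (M -> Prop) -> Prop) : Prop :=
  inhabited M /\ (forall j, 1 <= j <= 5 -> j <> i -> ax_nr M S j) /\
  ~ ax_nr M S i.

Lemma independence_model_intro (M : Type) (S : M -> (M -> Prop) -> Prop)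
    (i : nat) (x : M) :
  (i = 1 \/ axS1 M S) -> (i = 2 \/ axS2 M S) -> (i = 3 \/ axS3 M S) ->
  (i = 4 \/ axS4 M S) -> (i = 5 \/ axS5 M S) -> ~ ax_nr M S i ->
  independence_model i M S.
Proof.
  intros H1 H2 H3 H4 H5 Hi. split; [exact (inhabits x) | split; [| exact Hi]].
  intros j Hj Hji.
  assert (j = 1 \/ j = 2 \/ j = 3 \/ j = 4 \/ j = 5) as [->|[->|[->|[->| ->]]]]
    by lia; simpl.
  - destruct H1; [congruence | assumption].
  - destruct H2; [congruence | assumption].
  - destruct H3; [congruence | assumption].
  - destruct H4; [congruence | assumption].
  - destruct H5; [congruence | assumption].
Qed.

Lemma soverlaps_at (M : Type) (S : M -> (M -> Prop) -> Prop)
    (x y w : M) (X Y : M -> Prop) :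
  S x X -> S y Y -> X w -> Y w -> soverlaps M S x y.
Proof. intros HX HY Xw Yw. exists X, Y. repeat split; auto. exists w; auto. Qed.

Definition S_empty (_ : unit) (X : unit -> Prop) : Prop := forall y, ~ X y.

Lemma S_empty_independent : independence_model 1 unit S_empty.
Proof.
  apply (independence_model_intro _ _ _ tt).
  - left; reflexivity.
  - right. intros [] [] X _ _; reflexivity.
  - right. intros x y X Y _ HY Hx. destruct (HY x Hx).
  - right. intros x y X Y _ HY Hy. destruct (HY y Hy).
  - right. intros x X _ y [[Z [HZ Zy]] _]. exact (HZ y Zy).
  - intro H1. destruct (H1 (fun _ => True)) as [x Hx]; [exists tt; exact I |].
    exact (Hx tt I).
Qed.

Definition S_any (_ : bool) (X : bool -> Prop) : Prop := exists z, X z.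

Lemma S_any_below (x y : bool) : Iof bool S_any x y.
Proof. exists (fun w => w = y). split; [exists y |]; reflexivity. Qed.

Lemma S_any_independent : independence_model 2 bool S_any.
Proof.
  apply (independence_model_intro _ _ _ true).
  - right. intros X HX. exists true. exact HX.
  - left; reflexivity.
  - right. intros x y X Y _ _ Yx. exists x. right. exact Yx.
  - right. intros x y X Y [z Xz] _ _. exists z, (fun _ => True), (fun _ => True).
    repeat split; try (exists true); auto.
  - right. intros x X Hdense. destruct (Hdense x (S_any_below x x)) as [a [Xa _]].
    exists a. split; [apply S_any_below |]. exists a. split; [exact Xa | apply S_any_below].
  - intro H2. assert (true = false) by
      (apply (H2 true false (fun _ => True)); exists true; exact I).
    discriminate.
Qed.

Inductive abc := A | B | C.

Definition S_abc (x : abc) (X : abc -> Prop) : Prop :=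
  match x with
  | A => (exists z, X z) /\ ~ X C
  | B => X C /\ (X A \/ X B)
  | C => X C /\ ~ X A /\ ~ X B
  end.

Lemma S_abc_nonempty (x : abc) (X : abc -> Prop) : S_abc x X -> exists z, X z.
Proof. destruct x; simpl; [intros [H _] | intros [H _] | intros [H _]]; eauto. Qed.

Lemma S_abc_with_A (x : abc) : x <> C -> exists X, S_abc x X /\ X A.
Proof.
  destruct x; intro Hx; [| | congruence].
  - exists (fun w => w = A). simpl. repeat split; try (exists A); congruence.
  - exists (fun w => w = A \/ w = C). simpl. tauto.
Qed.

Lemma S_abc_with_C (x : abc) : x <> A -> exists X, S_abc x X /\ X C.
Proof.
  destruct x; intro Hx; [congruence | |].
  - exists (fun w => w = A \/ w = C). simpl. tauto.
  - exists (fun w => w = C). simpl. repeat split; congruence.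
Qed.

Lemma S_abc_overlaps (p q : abc) :
  ~ (p = A /\ q = C) -> ~ (p = C /\ q = A) -> soverlaps abc S_abc p q.
Proof.
  intros HAC HCA.
  destruct (classic (p = C \/ q = C)) as [HC | HC].
  - assert (p <> A /\ q <> A) as [Hp Hq]
      by (split; intros ->; destruct HC; discriminate || tauto).
    destruct (S_abc_with_C p Hp) as [X [HX XC]].
    destruct (S_abc_with_C q Hq) as [Y [HY YC]].
    exact (soverlaps_at _ _ _ _ _ _ _ HX HY XC YC).
  - destruct (S_abc_with_A p) as [X [HX XA]]; [tauto |].
    destruct (S_abc_with_A q) as [Y [HY YA]]; [tauto |].
    exact (soverlaps_at _ _ _ _ _ _ _ HX HY XA YA).
Qed.

Lemma S_abc_overlap_not_AC (p q : abc) :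
  soverlaps abc S_abc p q -> ~ (p = A /\ q = C) /\ ~ (p = C /\ q = A).
Proof.
  intros [X [Y [HX [HY [w [Xw Yw]]]]]].
  split; intros [-> ->]; simpl in HX, HY; destruct w; tauto.
Qed.

Lemma S_abc_below_A (y : abc) : Iof abc S_abc A y <-> y <> C.
Proof.
  split.
  - intros [X [[_ XC] Xy]] ->. contradiction.
  - intro Hy. exists (fun w => w = y). simpl. repeat split; try (exists y); congruence.
Qed.

Lemma S_abc_below_B (y : abc) : Iof abc S_abc B y.
Proof. exists (fun _ => True). simpl. tauto. Qed.

Lemma S_abc_below_C (y : abc) : Iof abc S_abc C y <-> y = C.
Proof.
  split.
  - intros [X [[XC [XA XB]] Xy]]. destruct y; tauto.
  - intros ->. exists (fun w => w = C). simpl. repeat split; congruence.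
Qed.

Lemma S_abc_below_refl (x : abc) : Iof abc S_abc x x.
Proof.
  destruct x; [apply S_abc_below_A; discriminate | apply S_abc_below_B |
               apply S_abc_below_C; reflexivity].
Qed.

Lemma S_abc_C_below (p : abc) : p <> A -> Iof abc S_abc p C.
Proof.
  destruct p; intro Hp; [congruence | apply S_abc_below_B | apply S_abc_below_C; reflexivity].
Qed.

(* Failure of (S3): B sums {B, C} and A sums {B}, but A does not sum {B, C}. *)
Lemma S_abc_not_S3 : ~ axS3 abc S_abc.
Proof.
  intro H3.
  assert (HB : S_abc B (fun w => w = B \/ w = C)) by (simpl; tauto).
  assert (HA : S_abc A (fun w => w = B))
    by (simpl; split; [exists B; reflexivity | discriminate]).
  destruct (H3 B A _ _ HB HA eq_refl) as [_ HnC]. apply HnC. left. right. reflexivity.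
Qed.

Lemma S_abc_S4 : axS4 abc S_abc.
Proof.
  intros x y X Y HX HY Yy.
  assert (Hz : exists z, X z /\ ~ (z = A /\ y = C) /\ ~ (z = C /\ y = A)).
  { destruct y.
    - destruct x; simpl in HX, HY.
      + destruct HX as [[z Xz] XC]. exists z.
        split; [exact Xz | split; intros [-> ?]; congruence].
      + destruct HX as [_ [XA | XB]]; [exists A | exists B];
          repeat split; try assumption; intros [? ?]; congruence.
      + tauto.
    - destruct (S_abc_nonempty x X HX) as [z Xz].
      exists z. repeat split; [exact Xz | |]; intros [? ?]; congruence.
    - destruct x; simpl in HX, HY; [tauto | |];
        exists C; repeat split; try tauto; intros [? ?]; congruence. }
  destruct Hz as [z [Xz [HAC HCA]]].
  destruct (S_abc_overlaps z y HAC HCA) as [Z [U [HZ [HU HZU]]]].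
  exists z, Z, U. auto.
Qed.

Lemma S_abc_dense_at_A (X P : abc -> Prop) :
  predense abc S_abc X P -> P A -> exists q, X q /\ q <> C.
Proof.
  intros Hdense PA. destruct (Hdense A PA) as [q [Xq Hov]].
  exists q. split; [exact Xq |].
  intros ->. apply (proj2 (S_abc_overlap_not_AC _ _ Hov)). auto.
Qed.

Lemma S_abc_dense_at_C (X P : abc -> Prop) :
  predense abc S_abc X P -> P C -> IofSet abc S_abc X C.
Proof.
  intros Hdense PC. destruct (Hdense C PC) as [p [Xp Hov]].
  exists p. split; [exact Xp |]. apply S_abc_C_below.
  intros ->. apply (proj1 (S_abc_overlap_not_AC _ _ Hov)). auto.
Qed.

Lemma S_abc_S5 : axS5 abc S_abc.
Proof.
  intros x X Hdense. destruct x; simpl.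
  - destruct (S_abc_dense_at_A X _ Hdense (S_abc_below_refl A)) as [a [Xa Ha]].
    split.
    + exists a. split; [apply S_abc_below_A; exact Ha |].
      exists a. split; [exact Xa | apply S_abc_below_refl].
    + intros [HC _]. apply S_abc_below_A in HC. apply HC. reflexivity.
  - destruct (S_abc_dense_at_A X _ Hdense (S_abc_below_B A)) as [q [Xq Hq]].
    split; [split; [apply S_abc_below_B | exact (S_abc_dense_at_C X _ Hdense (S_abc_below_B C))] |].
    destruct q; [left | right | contradiction];
      (split; [apply S_abc_below_B | eexists; split; [exact Xq | apply S_abc_below_refl]]).
  - split; [split; [apply S_abc_below_refl | exact (S_abc_dense_at_C X _ Hdense (S_abc_below_refl C))] |].
    split; intros [H _]; apply S_abc_below_C in H; discriminate.
Qed.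

Lemma S_abc_independent : independence_model 3 abc S_abc.
Proof.
  apply (independence_model_intro _ _ _ A).
  - right. intros X [z Xz]. destruct (classic (X C)) as [XC | XC].
    + destruct (classic (X A \/ X B)) as [XAB | XAB];
        [exists B | exists C]; simpl; tauto.
    + exists A. simpl. split; [exists z |]; assumption.
  - right. intros [] [] X H1 H2; simpl in *; try reflexivity; tauto.
  - left; reflexivity.
  - right. exact S_abc_S4.
  - right. exact S_abc_S5.
  - exact S_abc_not_S3.
Qed.

Definition S_split (x : bool) (X : bool -> Prop) : Prop :=
  if x then exists z, X z else forall z, ~ X z.

Lemma S_split_overlap_true (a b : bool) : soverlaps bool S_split a b -> a = true.
Proof.
  destruct a; [reflexivity |]. intros [X [_ [HX [_ [w [Xw _]]]]]]. destruct (HX w Xw).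
Qed.

Lemma S_split_below_true (y : bool) : Iof bool S_split true y.
Proof. exists (fun w => w = y). split; [exists y |]; reflexivity. Qed.

Lemma S_split_independent : independence_model 4 bool S_split.
Proof.
  apply (independence_model_intro _ _ _ true).
  - right. intros X HX. exists true. exact HX.
  - right. intros [] [] X H1 H2; simpl in *; try reflexivity.
    + destruct H1 as [z Xz]. destruct (H2 z Xz).
    + destruct H2 as [z Xz]. destruct (H1 z Xz).
  - right. intros x [] X Y _ HY Yx; simpl in *.
    + exists x. right. exact Yx.
    + destruct (HY x Yx).
  - left; reflexivity.
  - right. intros [] X Hdense; simpl.
    + destruct (Hdense true (S_split_below_true true)) as [a [Xa Hov]].
      apply S_split_overlap_true in Hov. subst a.
      exists true. split; [apply S_split_below_true |].
      exists true. split; [exact Xa | apply S_split_below_true].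
    + intros z [[Z [HZ Zz]] _]. exact (HZ z Zz).
  (* true sums {true} and {false}, but false meets no set it sums *)
  - intro H4.
    destruct (H4 true false (fun z => z = true) (fun z => z = false))
      as [z [Z [U [_ [_ [HU [w [_ Uw]]]]]]]];
      [exists true; reflexivity | exists false; reflexivity | reflexivity |].
    exact (HU w Uw).
Qed.

Definition S_pref (x : bool) (X : bool -> Prop) : Prop :=
  if x then X true else X false /\ ~ X true.

Lemma S_pref_member (x : bool) (X : bool -> Prop) : S_pref x X -> X x.
Proof. destruct x; simpl; tauto. Qed.

Lemma S_pref_with_false (x : bool) : S_pref x (fun w => w = x \/ w = false).
Proof. destruct x; simpl; [left; reflexivity | split; [left |]; intuition discriminate]. Qed.

Lemma S_pref_overlap_member (x y : bool) (Y : bool -> Prop) :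
  S_pref x Y -> Y y -> soverlaps bool S_pref x y.
Proof.
  intros HY Yy. destruct x.
  - apply (soverlaps_at _ _ _ _ y (fun w => w = true \/ w = y) (fun w => w = y));
      simpl; auto.
    destruct y; simpl; [reflexivity | split; [reflexivity | discriminate]].
  - destruct y; [destruct HY; contradiction |].
    apply (soverlaps_at _ _ _ _ false _ _ (S_pref_with_false false) (S_pref_with_false false));
      left; reflexivity.
Qed.

Lemma S_pref_below_false (y : bool) : Iof bool S_pref false y -> y = false.
Proof. intros [Z [[_ Zt] Zy]]. destruct y; [contradiction | reflexivity]. Qed.

(* Failure of (S5): {false} is pre-dense around true, yet true would have to
   lie below false. *)
Lemma S_pref_not_S5 : ~ axS5 bool S_pref.
Proof.
  intro H5.
  assert (Hdense : predense bool S_pref (fun w => w = false) (Iof bool S_pref true)).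
  { intros b _. exists false. split; [reflexivity |].
    apply (soverlaps_at _ _ _ _ false _ _ (S_pref_with_false false) (S_pref_with_false b));
      right; reflexivity. }
  destruct (H5 true _ Hdense) as [_ [a [-> Hbelow]]].
  discriminate (S_pref_below_false true Hbelow).
Qed.

Lemma S_pref_independent : independence_model 5 bool S_pref.
Proof.
  apply (independence_model_intro _ _ _ true).
  - right. intros X [z Xz]. destruct (classic (X true)) as [Xt | Xt].
    + exists true. exact Xt.
    + exists false. destruct z; [contradiction |]. simpl. tauto.
  - right. intros [] [] X H1 H2; simpl in *; tauto || reflexivity.
  - right. intros x [] X Y HX HY Yx; simpl in *; unfold setU.
    + right. exact HY.
    + destruct x; [tauto |]. simpl in HX. tauto.
  - right. intros x y X Y HX HY Yy. destruct (S_pref_overlap_member x y Y HY Yy) as [Z [U HZU]].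
    exists x, Z, U. split; [exact (S_pref_member x X HX) | exact HZU].
  - left; reflexivity.
  - exact S_pref_not_S5.
Qed.

Theorem theorem5p1 :
  forall i : nat, 1 <= i <= 5 ->
    exists (M : Type) (S : M -> (M -> Prop) -> Prop),
      inhabited M /\
      (forall j : nat, 1 <= j <= 5 -> j <> i -> ax_nr M S j) /\
      ~ ax_nr M S i.
Proof.
  intros i Hi.
  assert (i = 1 \/ i = 2 \/ i = 3 \/ i = 4 \/ i = 5) as [->|[->|[->|[->| ->]]]] by lia.
  - exists unit, S_empty. exact S_empty_independent.
  - exists bool, S_any. exact S_any_independent.
  - exists abc, S_abc. exact S_abc_independent.
  - exists bool, S_split. exact S_split_independent.
  - exists bool, S_pref. exact S_pref_independent.
Qed.
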